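(* Let $S\in(0,1)$ and let $f_S,f_C,h_S,h_C>0$ satisfy the dominance assumption $f_S>h_C$ and $f_C>h_S$. Put $r_S=f_S/h_S$ and $r_C=f_C/h_C$. For the planar system \[ SB' = f_S\,SB\,(S-SB) - h_S\,CR\cdot SB,\qquad CR' = f_C\,CR\,(1-S-CR) - h_C\,SB\cdot CR, \] the following hold: (i) the equilibrium $(SB,CR)=(0,0)$ (i.e. $SR=S$, $CB=1-S$) is never stable; (ii) the Blue-victory equilibrium $(SB,CR)=(S,0)$ (i.e. $SR=CR=0$, $CB=1-S$) is stable if and only if $r_C<\frac{S}{1-S}$; (iii) the Red-victory equilibrium $(SB,CR)=(0,1-S)$ (i.e. $SB=CB=0$, $SR=S$) is stable if and only if $r_S<\frac{1-S}{S}$; (iv) the stalemate equilibrium $(SB_b,CR_b)$ is stable if and only if $\frac{1}{1+r_S}<S<\frac{r_C}{1+r_C}$, equivalently $r_C>\frac{S}{1-S}$ and $r_S>\frac{1-S}{S}$, where \[ CB_b=\frac{S(1+r_S)-1}{r_Sr_C-1},\quad SR_b=\frac{r_C-S(1+r_C)}{r_Sr_C-1},\quad SB_b=r_C\,CB_b,\quad CR_b=r_S\,SR_b . \] Moreover, the conditions in (ii) and (iii) cannot hold simultaneously.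
   Context: Basic armed-revolt model. A population of total size $1$ is split into supporters of Blue, a fixed fraction $S\in(0,1)$, and contrarians (supporters of Red), a fraction $1-S$. The variables $SB,SR,CR,CB\ge 0$ are the fractions of the total population that are, respectively, supporters controlled by Blue, supporters controlled by Red, contrarians controlled by Red, contrarians controlled by Blue, with $SB+SR=S$ and $CR+CB=1-S$. This reduces the model to the planar system in $(SB,CR)$ given in the claim. An equilibrium is called stable when all eigenvalues of the Jacobian of the planar system's right-hand side, evaluated at that equilibrium, have negative real part. Under the dominance assumption $r_Sr_C>1$, so the denominators in the stalemate formulas are positive. *)

From Stdlib Require Import Reals Lra.
Open Scope R_scope.

Definition SBdot (S fS hS : R) (SB CR : R) : R :=
  fS * SB * (S - SB) - hS * CR * SB.
Definition CRdot (S fC hC : R) (SB CR : R) : R :=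
  fC * CR * (1 - S - CR) - hC * SB * CR.

Record mat2 : Type := Mat2 { m11 : R; m12 : R; m21 : R; m22 : R }.

Definition is_jacobian (F G : R -> R -> R) (x y : R) (J : mat2) : Prop :=
  derivable_pt_lim (fun u => F u y) x (m11 J) /\
  derivable_pt_lim (fun v => F x v) y (m12 J) /\
  derivable_pt_lim (fun u => G u y) x (m21 J) /\
  derivable_pt_lim (fun v => G x v) y (m22 J).

(* Complex numbers as pairs (re, im), with their ring operations. *)
Definition Cx := (R * R)%type.
Definition Cx_sub (z w : Cx) : Cx := (fst z - fst w, snd z - snd w).
Definition Cx_mul (z w : Cx) : Cx :=
  (fst z * fst w - snd z * snd w, fst z * snd w + snd z * fst w).
Definition Cx_of_R (a : R) : Cx := (a, 0).

(* z is a (complex) eigenvalue of J: det (z I - J) = 0. *)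
Definition is_eigenvalue (J : mat2) (z : Cx) : Prop :=
  Cx_sub (Cx_mul (Cx_sub z (Cx_of_R (m11 J))) (Cx_sub z (Cx_of_R (m22 J))))
         (Cx_of_R (m12 J * m21 J)) = (0, 0).

Definition stable_at (F G : R -> R -> R) (x y : R) : Prop :=
  exists J : mat2, is_jacobian F G x y J /\
    forall z : Cx, is_eigenvalue J z -> fst z < 0.

From Stdlib Require Import Reals Lra Psatz Classical.
From Coquelicot Require Import Coquelicot.
Open Scope R_scope.

(* Stability is decided by the Routh-Hurwitz criterion for 2x2 matrices:
   every root of z^2 - tr(J) z + det(J) has negative real part iff
   tr(J) < 0 and det(J) > 0.  Since the Jacobian of the system is uniquely
   determined by its partial derivatives, stability at (x,y) of the revolt
   system is therefore equivalent to trace < 0 /\ det > 0 for the explicit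
   Jacobian [revolt_jacobian].
   At (0,0) the trace is positive.  At the two victory equilibria the Jacobian
   is triangular, so the criterion reduces to negativity of the two diagonal
   entries, one of which is always negative and the other gives the threshold.
   At the stalemate, the equilibrium relations turn the Jacobian into
   [[-fS x, -hS x], [-hC y, -fC y]] with det = x y (fS fC - hS hC), and the
   dominance assumption makes the criterion equivalent to x, y > 0, i.e. to
   CB_b > 0 and SR_b > 0.  The remaining parts are elementary manipulations
   of the thresholds, using that S/(1-S) and (1-S)/S are reciprocal while
   r_S r_C > 1. *)

Lemma div_lt_iff (a b c : R) : 0 < b -> (a / b < c <-> a < c * b).
Proof.
  intros Hb; split; intros H.
  - replace a with (a / b * b) by (field; lra).
    apply Rmult_lt_compat_r; assumption.
  - replace c with (c * b * / b) by (field; lra).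
    apply Rmult_lt_compat_r; [apply Rinv_0_lt_compat|]; assumption.
Qed.

Lemma lt_div_iff (a b c : R) : 0 < b -> (c < a / b <-> c * b < a).
Proof.
  intros Hb; split; intros H.
  - replace a with (a / b * b) by (field; lra).
    apply Rmult_lt_compat_r; assumption.
  - replace c with (c * b * / b) by (field; lra).
    apply Rmult_lt_compat_r; [apply Rinv_0_lt_compat|]; assumption.
Qed.

Lemma ratio_lt_iff (a b c d : R) :
  0 < b -> 0 < d -> (a / b < c / d <-> a * d < c * b).
Proof.
  intros Hb Hd.
  rewrite div_lt_iff by assumption.
  replace (c / d * b) with ((c * b) / d) by (field; lra).
  apply lt_div_iff; assumption.
Qed.

Definition mtrace (J : mat2) : R := m11 J + m22 J.
Definition mdet (J : mat2) : R := m11 J * m22 J - m12 J * m21 J.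

Definition hurwitz (J : mat2) : Prop := mtrace J < 0 /\ mdet J > 0.

Lemma is_eigenvalue_iff (J : mat2) (x y : R) :
  is_eigenvalue J (x, y) <->
  x * x - y * y - mtrace J * x + mdet J = 0 /\ y * (2 * x - mtrace J) = 0.
Proof.
  destruct J as [a b c d].
  unfold is_eigenvalue, mtrace, mdet, Cx_sub, Cx_mul, Cx_of_R; simpl.
  split.
  - intros E; injection E; intros Eim Ere; split; lra.
  - intros [Ere Eim]; f_equal; lra.
Qed.

(* Under the Hurwitz condition every eigenvalue has negative real part:
   a non-real root has real part tr/2 < 0, and a real root x >= 0 would make
   x^2 - tr x + det positive. *)
Lemma hurwitz_eigenvalues_neg (J : mat2) (z : Cx) :
  hurwitz J -> is_eigenvalue J z -> fst z < 0.
Proof.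
  destruct z as [x y]; simpl; intros [Htr Hdet] Hz.
  apply is_eigenvalue_iff in Hz as [Ere Eim].
  destruct (Req_dec y 0) as [-> | Hy].
  - destruct (Rlt_or_le x 0) as [Hx | Hx]; [assumption | nra].
  - apply Rmult_integral in Eim as [Hy0 | Hx]; [contradiction | lra].
Qed.

(* Conversely, if the Hurwitz condition fails there is an eigenvalue with
   non-negative real part, found by solving the quadratic explicitly. *)
Lemma not_hurwitz_eigenvalue (J : mat2) :
  ~ hurwitz J -> exists z : Cx, is_eigenvalue J z /\ 0 <= fst z.
Proof.
  unfold hurwitz; intros Hnot.
  set (tr := mtrace J); set (dt := mdet J); set (D := tr * tr - 4 * dt).
  assert (HDdef : D = tr * tr - 4 * dt) by reflexivity.
  clearbody D.
  assert (Hcase : tr >= 0 \/ dt <= 0).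
  { destruct (Rlt_or_le tr 0); [|left; lra].
    destruct (Rlt_or_le 0 dt); [|right; lra].
    exfalso; apply Hnot; split; assumption. }
  destruct (Rle_or_lt 0 D) as [HD | HD].
  -
    exists ((tr + sqrt D) / 2, 0); simpl.
    pose proof (sqrt_sqrt D HD) as Hsq; pose proof (sqrt_pos D).
    split.
    + apply is_eigenvalue_iff; fold tr dt; split; [nra | ring].
    + destruct Hcase as [Htr | Hdt]; [lra|].
      (* if det <= 0 then sqrt D >= |tr| *)
      assert (Habs : Rabs tr <= sqrt D).
      { rewrite <- sqrt_Rsqr_abs; apply sqrt_le_1_alt; unfold Rsqr; lra. }
      unfold Rabs in Habs; destruct (Rcase_abs tr); lra.
  - (* non-real roots tr/2 +- i sqrt(-D)/2; here det > 0 forces tr >= 0 *)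
    exists (tr / 2, sqrt (- D) / 2); simpl.
    pose proof (sqrt_sqrt (- D) ltac:(lra)) as Hsq.
    split.
    + apply is_eigenvalue_iff; fold tr dt; split; [nra | field].
    + destruct Hcase; nra.
Qed.

Lemma is_jacobian_unique (F G : R -> R -> R) (x y : R) (J J' : mat2) :
  is_jacobian F G x y J -> is_jacobian F G x y J' -> J = J'.
Proof.
  destruct J as [a b c d], J' as [a' b' c' d']; simpl.
  intros [A1 [A2 [A3 A4]]] [B1 [B2 [B3 B4]]].
  f_equal; eapply uniqueness_limite; eassumption.
Qed.

Lemma stable_at_iff_hurwitz (F G : R -> R -> R) (x y : R) (J : mat2) :
  is_jacobian F G x y J -> (stable_at F G x y <-> hurwitz J).
Proof.
  intros HJ; split.
  - intros [J' [HJ' Hneg]].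
    rewrite (is_jacobian_unique F G x y J J' HJ HJ').
    apply NNPP; intros Hnot.
    destruct (not_hurwitz_eigenvalue J' Hnot) as [z [Hz Hz0]].
    specialize (Hneg z Hz); lra.
  - intros Hh; exists J; split; [assumption|].
    intros z; apply hurwitz_eigenvalues_neg; assumption.
Qed.

Lemma hurwitz_triangular (J : mat2) :
  m12 J = 0 \/ m21 J = 0 -> (hurwitz J <-> m11 J < 0 /\ m22 J < 0).
Proof.
  unfold hurwitz, mtrace, mdet; intros Htri.
  assert (Hdet : m11 J * m22 J - m12 J * m21 J = m11 J * m22 J)
    by (destruct Htri as [-> | ->]; ring).
  rewrite Hdet; split; intros [H1 H2]; split; nra.
Qed.

Definition revolt_jacobian (S fS fC hS hC x y : R) : mat2 :=
  Mat2 (fS * (S - 2 * x) - hS * y) (- (hS * x))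
       (- (hC * y)) (fC * (1 - S - 2 * y) - hC * x).

Lemma revolt_jacobian_spec (S fS fC hS hC x y : R) :
  is_jacobian (SBdot S fS hS) (CRdot S fC hC) x y
              (revolt_jacobian S fS fC hS hC x y).
Proof.
  unfold is_jacobian, SBdot, CRdot, revolt_jacobian; simpl.
  repeat split; apply is_derive_Reals; auto_derive; auto; ring.
Qed.

Lemma revolt_stable_iff (S fS fC hS hC x y : R) :
  stable_at (SBdot S fS hS) (CRdot S fC hC) x y <->
  hurwitz (revolt_jacobian S fS fC hS hC x y).
Proof. apply stable_at_iff_hurwitz, revolt_jacobian_spec. Qed.

(* (0,0) is unstable: the trace fS S + fC (1 - S) is positive. *)
Lemma origin_unstable (S fS fC hS hC : R) :
  0 < S < 1 -> 0 < fS -> 0 < fC ->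
  ~ stable_at (SBdot S fS hS) (CRdot S fC hC) 0 0.
Proof.
  intros HS HfS HfC Hst; apply revolt_stable_iff in Hst as [Htr _].
  unfold mtrace, revolt_jacobian in Htr; simpl in Htr; nra.
Qed.

(* Blue victory (S, 0): the Jacobian is upper triangular with diagonal
   -fS S < 0 and fC (1 - S) - hC S. *)
Lemma blue_victory_stable_iff (S fS fC hS hC : R) :
  0 < S < 1 -> 0 < fS -> 0 < hC ->
  stable_at (SBdot S fS hS) (CRdot S fC hC) S 0 <->
  fC / hC < S / (1 - S).
Proof.
  intros HS HfS HhC.
  rewrite revolt_stable_iff, hurwitz_triangular
    by (right; unfold revolt_jacobian; simpl; ring).
  rewrite ratio_lt_iff by lra.
  unfold revolt_jacobian; simpl; split.
  - intros [_ H]; lra.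
  - intros H; split; nra.
Qed.

(* Red victory (0, 1 - S): the Jacobian is lower triangular with diagonal
   fS S - hS (1 - S) and -fC (1 - S) < 0. *)
Lemma red_victory_stable_iff (S fS fC hS hC : R) :
  0 < S < 1 -> 0 < fC -> 0 < hS ->
  stable_at (SBdot S fS hS) (CRdot S fC hC) 0 (1 - S) <->
  fS / hS < (1 - S) / S.
Proof.
  intros HS HfC HhS.
  rewrite revolt_stable_iff, hurwitz_triangular
    by (left; unfold revolt_jacobian; simpl; ring).
  rewrite ratio_lt_iff by lra.
  unfold revolt_jacobian; simpl; split.
  - intros [H _]; lra.
  - intros H; split; nra.
Qed.

Lemma interior_stable_iff (S fS fC hS hC x y : R) :
  0 < fS -> 0 < fC -> hS * hC < fS * fC ->
  fS * (S - x) = hS * y -> fC * (1 - S - y) = hC * x ->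
  stable_at (SBdot S fS hS) (CRdot S fC hC) x y <-> 0 < x /\ 0 < y.
Proof.
  intros HfS HfC Hdom Ex Ey.
  rewrite revolt_stable_iff; unfold hurwitz, mtrace, mdet, revolt_jacobian; simpl.
  replace (fS * (S - 2 * x) - hS * y) with (- (fS * x)) by lra.
  replace (fC * (1 - S - 2 * y) - hC * x) with (- (fC * y)) by lra.
  replace (- (fS * x) * - (fC * y) - - (hS * x) * - (hC * y))
    with (x * y * (fS * fC - hS * hC)) by ring.
  split.
  - intros [Htr Hdet].
    assert (Hxy : 0 < x * y) by nra.
    split; nra.
  - intros [Hx Hy]; split; [nra|].
    apply Rlt_gt, Rmult_lt_0_compat; [apply Rmult_lt_0_compat|]; lra.
Qed.

(* The stalemate coordinates CB_b and SR_b, in terms of rS = fS/hS and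
   rC = fC/hC; the stalemate itself is (rC CB_b, rS SR_b). *)
Definition stalemate_CB (S rS rC : R) : R := (S * (1 + rS) - 1) / (rS * rC - 1).
Definition stalemate_SR (S rS rC : R) : R := (rC - S * (1 + rC)) / (rS * rC - 1).

Lemma stalemate_equilibrium (S fS fC hS hC : R) :
  0 < hS -> 0 < hC -> hS * hC < fS * fC ->
  let x := fC / hC * stalemate_CB S (fS / hS) (fC / hC) in
  let y := fS / hS * stalemate_SR S (fS / hS) (fC / hC) in
  fS * (S - x) = hS * y /\ fC * (1 - S - y) = hC * x.
Proof.
  intros HhS HhC Hdom x y; unfold x, y, stalemate_CB, stalemate_SR.
  assert (Hden : fS / hS * (fC / hC) - 1 <> 0).
  { replace (fS / hS * (fC / hC) - 1) with ((fS * fC - hS * hC) / (hS * hC))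
      by (field; lra).
    apply Rgt_not_eq, Rdiv_lt_0_compat; nra. }
  split; field; lra.
Qed.

Lemma stalemate_positive_iff (S rS rC : R) :
  0 < S < 1 -> 0 < rS -> 0 < rC -> 1 < rS * rC ->
  (0 < rC * stalemate_CB S rS rC /\ 0 < rS * stalemate_SR S rS rC) <->
  (1 / (1 + rS) < S /\ S < rC / (1 + rC)).
Proof.
  intros HS HrS HrC Hprod; unfold stalemate_CB, stalemate_SR.
  assert (Hscale : forall r u, 0 < r -> (0 < r * u <-> 0 < u))
    by (intros r u Hr; split; intros; nra).
  rewrite Hscale, Hscale, !lt_div_iff, div_lt_iff by lra.
  split; intros [H1 H2]; split; lra.
Qed.

Lemma lower_threshold_iff (S r : R) :
  0 < S < 1 -> 0 < r -> (1 / (1 + r) < S <-> (1 - S) / S < r).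
Proof.
  intros HS Hr.
  rewrite div_lt_iff, div_lt_iff by lra; split; intros; nra.
Qed.

Lemma upper_threshold_iff (S r : R) :
  0 < S < 1 -> 0 < r -> (S < r / (1 + r) <-> S / (1 - S) < r).
Proof.
  intros HS Hr.
  rewrite lt_div_iff, div_lt_iff by lra; split; intros; nra.
Qed.

(* The victory conditions exclude each other, since their thresholds are
   reciprocal while rS rC > 1. *)
Lemma victories_exclusive (S rS rC : R) :
  0 < S < 1 -> 0 < rS -> 0 < rC -> 1 < rS * rC ->
  ~ (rC < S / (1 - S) /\ rS < (1 - S) / S).
Proof.
  intros HS HrS HrC Hprod [HC HSr].
  assert (Hrecip : S / (1 - S) * ((1 - S) / S) = 1) by (field; lra).
  assert (rC * rS < S / (1 - S) * ((1 - S) / S))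
    by (apply Rmult_le_0_lt_compat; lra).
  lra.
Qed.

Theorem theorem1 (S fS fC hS hC : R)
  (hS0 : 0 < S) (hS1 : S < 1)
  (hfS : 0 < fS) (hfC : 0 < fC) (hhS : 0 < hS) (hhC : 0 < hC)
  (hdom1 : fS > hC) (hdom2 : fC > hS) :
  let rS := fS / hS in
  let rC := fC / hC in
  let F := SBdot S fS hS in
  let G := CRdot S fC hC in
  let CBb := (S * (1 + rS) - 1) / (rS * rC - 1) in
  let SRb := (rC - S * (1 + rC)) / (rS * rC - 1) in
  let SBb := rC * CBb in
  let CRb := rS * SRb in
  (* (i) *)
  ~ stable_at F G 0 0 /\
  (* (ii) *)
  (stable_at F G S 0 <-> rC < S / (1 - S)) /\
  (* (iii) *)
  (stable_at F G 0 (1 - S) <-> rS < (1 - S) / S) /\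
  (* (iv) *)
  (stable_at F G SBb CRb <-> (1 / (1 + rS) < S /\ S < rC / (1 + rC))) /\
  ((1 / (1 + rS) < S /\ S < rC / (1 + rC)) <->
     (rC > S / (1 - S) /\ rS > (1 - S) / S)) /\
  (* moreover *)
  ~ (rC < S / (1 - S) /\ rS < (1 - S) / S).
Proof.
  intros rS rC F G CBb SRb SBb CRb.
  assert (HS : 0 < S < 1) by lra.
  assert (HrS : 0 < rS) by (apply Rdiv_lt_0_compat; lra).
  assert (HrC : 0 < rC) by (apply Rdiv_lt_0_compat; lra).
  assert (Hdom : hS * hC < fS * fC) by nra.
  assert (Hprod : 1 < rS * rC).
  { replace (rS * rC) with ((fS * fC) / (hS * hC)) by (unfold rS, rC; field; lra).
    apply lt_div_iff; nra. }
  unfold F, G; split; [|split; [|split; [|split; [|split]]]].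
  - apply origin_unstable; assumption.
  - apply blue_victory_stable_iff; assumption.
  - apply red_victory_stable_iff; assumption.
  - destruct (stalemate_equilibrium S fS fC hS hC hhS hhC Hdom) as [Ex Ey].
    rewrite (interior_stable_iff S fS fC hS hC SBb CRb hfS hfC Hdom Ex Ey).
    apply stalemate_positive_iff; assumption.
  - unfold Rgt; rewrite lower_threshold_iff, upper_threshold_iff by assumption.
    tauto.
  - apply victories_exclusive; assumption.
Qed.
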